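(* Let $n\ge 3$. If $\mu$ is a symmetric measure on $L_n$ such that $C_{L_n}=C_\mu$, then $C_\mu=\max\{M_1(\mu),C^0_\mu\}$.
   Context: $L_n$ is the path graph with vertices $\{1,\dots,n\}$ and edges $\{j,j+1\}$, with distance $|i-j|$. A measure on $L_n$ is a weight function $\mu:\{1,\dots,n\}\to(0,\infty)$, $\mu(A)=\sum_{v\in A}\mu(v)$; it is symmetric if $\mu(j)=\mu(n+1-j)$ for all $j$. Closed balls: $B(x,r)=\{y:|x-y|\le r\}$. $C_\mu=\sup\{\mu(B(x,2k+1))/\mu(B(x,k)):1\le x\le n,\ k\ge0\}$, $C_{L_n}=\inf_\mu C_\mu$, $C^0_\mu=\max_x\mu(B(x,1))/\mu(x)$, and $M_1(\mu)=\sup\{\mu(B(1,2k+1))/\mu(B(1,k)): k\in\mathbb Z,\ 0\le k<\lceil\frac{n-2}{3}\rceil\}$. *)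

From HB Require Import structures.
From mathcomp Require Import all_boot all_order all_algebra.
From mathcomp Require Import classical_sets reals.
Set Implicit Arguments. Unset Strict Implicit. Unset Printing Implicit Defensive.
Import Order.TTheory GRing.Theory Num.Theory.
Local Open Scope classical_set_scope.
Local Open Scope ring_scope.

(* The path graph L_n has vertices 1..n; distance |i - j|. *)
Definition pdist (i j : nat) : nat := ((i - j) + (j - i))%N.

(* A measure on L_n: a weight function on {1,...,n} with positive values.
   We represent it as mu : nat -> R; values outside 1..n are irrelevant. *)
Definition is_measure (R : realType) (n : nat) (mu : nat -> R) : Prop :=
  forall j, (1 <= j <= n)%N -> 0 < mu j.

Definition is_symmetric (R : realType) (n : nat) (mu : nat -> R) : Prop :=
  forall j, (1 <= j <= n)%N -> mu j = mu (n.+1 - j)%N.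

Definition ball_mass (R : realType) (n : nat) (mu : nat -> R) (x r : nat) : R :=
  \sum_(1 <= y < n.+1 | (pdist x y <= r)%N) mu y.

Definition C_mu (R : realType) (n : nat) (mu : nat -> R) : R :=
  sup [set t : R | exists x k : nat, (1 <= x <= n)%N /\
         t = ball_mass n mu x (2 * k + 1) / ball_mass n mu x k].

Definition C_L (R : realType) (n : nat) : R :=
  inf [set t : R | exists mu : nat -> R, is_measure n mu /\ t = C_mu n mu].

Definition C0_mu (R : realType) (n : nat) (mu : nat -> R) : R :=
  sup [set t : R | exists x : nat, (1 <= x <= n)%N /\
         t = ball_mass n mu x 1 / mu x].

Definition ceil_div (a b : nat) : nat := ((a + b - 1) %/ b)%N.

Definition M1 (R : realType) (n : nat) (mu : nat -> R) : R :=
  sup [set t : R | exists k : nat, (k < ceil_div (n - 2) 3)%N /\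
         t = ball_mass n mu 1 (2 * k + 1) / ball_mass n mu 1 k].

(* Let B := max M1 C0, so that B <= C_mu.  The counting measure has doubling
   constant at most 3, hence C_mu = C_{L_n} <= 3 and B <= 3.  Since C0 <= B
   means mu(y-1) + mu(y+1) <= (B-1) mu(y) <= 2 mu(y), the weight sequence,
   extended by 0 at the vertices 0 and n+1, is concave; being symmetric, it
   increases towards the middle of the path.
   If [x-k, x+k] lies within [1, n], concavity bounds each point of
   B(x,2k+1) at distance > k+1 from x by two adjacent points of B(x,k), and
   summing the local bound over B(x,k) yields mu(B(x,2k+1)) <= B mu(B(x,k)).
   Otherwise, after reflecting, B(x,k) = B(1,x+k-1) and the ratio at x is at
   most the ratio at 1.  At the end vertex 1 the ratio is nonincreasing in k
   from k = ceil((n-2)/3) - 1 on (a cross-multiplied inequality between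
   prefix masses, using monotonicity and, in the extreme case, AM-GM with
   concavity), and M1 bounds it for smaller k. *)

From HB Require Import structures.
From mathcomp Require Import all_boot all_order all_algebra.
From mathcomp Require Import classical_sets reals.
From mathcomp Require Import lra zify.
Set Implicit Arguments. Unset Strict Implicit. Unset Printing Implicit Defensive.
Import Order.TTheory GRing.Theory Num.Theory.
Local Open Scope ring_scope.

Section ConcaveSequence.
Variables (R : realDomainType) (f : nat -> R) (N : nat).
Hypothesis f_concave : forall i, (i.+2 <= N)%N -> f i + f i.+2 <= 2 * f i.+1.

Lemma concave_increment_anti i j : (i <= j)%N -> (j < N)%N ->
  f j.+1 - f j <= f i.+1 - f i.
Proof.
elim: j => [|j IHj]; first by rewrite leqn0 => /eqP ->.
rewrite leq_eqVlt ltnS => /predU1P [-> //|ij] jN.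
by apply: le_trans (IHj ij (ltnW jN)); have := f_concave jN; lra.
Qed.

Lemma concave_exchange a b c d : (a <= b)%N -> (a <= c)%N -> (a + d = b + c)%N ->
  (d <= N)%N -> f a + f d <= f b + f c.
Proof.
move=> ab ac abcd dN.
have increment_sum p m : f (p + m) - f p = \sum_(i < m) (f (p + i).+1 - f (p + i)).
  elim: m => [|m IHm]; first by rewrite big_ord0 addn0 subrr.
  by rewrite big_ord_recr -IHm addnS /=; lra.
have key : f (c + (b - a)) - f c <= f (a + (b - a)) - f a.
  rewrite !increment_sum; apply: ler_sum => i _.
  by apply: concave_increment_anti; have := ltn_ord i; lia.
rewrite subnKC // (_ : c + (b - a) = d)%N in key; last lia.
lra.
Qed.

End ConcaveSequence.

Lemma sum_doubling_le (R : realDomainType) (a : nat -> R) (B : R) k :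
  (forall i, (i < k)%N -> a i + a i.+2 <= (B - 1) * a i.+1) ->
  (forall i, (i < k)%N -> a (k + i).+2 <= a i + a i.+1) ->
  \sum_(i < 2 * k + 1) a i.+1 <= a 1%N + B * \sum_(i < k) a i.+1.
Proof.
move=> nbr tail.
rewrite (_ : 2 * k + 1 = k.+1 + k)%N; last lia.
rewrite big_split_ord big_ord_recl /=.
have tail_le : \sum_(i < k) a (k.+1 + i).+1 <= \sum_(i < k) (a i + a i.+1).
  by apply: ler_sum => i _; apply: tail.
have nbr_sum : \sum_(i < k) (a i + a i.+2) <= (B - 1) * \sum_(i < k) a i.+1.
  by rewrite mulr_sumr; apply: ler_sum => i _; apply: nbr.
rewrite !big_split /= in tail_le nbr_sum.
lra.
Qed.

Lemma sum_doubling_le_nonincreasing (R : realDomainType) (a : nat -> R) k :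
  (forall i j, (i <= j)%N -> a j <= a i) ->
  \sum_(i < 2 * k + 1) a i.+1 <= a 0%N + 2 * \sum_(i < k) a i.+1.
Proof.
move=> a_anti.
rewrite (_ : 2 * k + 1 = k.+1 + k)%N; last lia.
rewrite big_split_ord big_ord_recr /=.
have tail_le : \sum_(i < k) a (k.+1 + i).+1 <= \sum_(i < k) a i.+1.
  by apply: ler_sum => i _; apply: a_anti; lia.
have := a_anti 0%N k.+1 isT; lra.
Qed.

Section PathWeights.
Variables (R : realType) (n : nat) (mu : nat -> R).

Definition weight (y : nat) : R := if (1 <= y <= n)%N then mu y else 0.

Definition arm (x r : nat) : R := \sum_(i < r) weight (x + i.+1).

Definition doubling_ratio (x k : nat) : R :=
  ball_mass n mu x (2 * k + 1) / ball_mass n mu x k.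

Definition neighbours_le (b : R) : Prop :=
  forall i, (i < n)%N -> weight i + weight i.+2 <= b * weight i.+1.

Lemma weight_out y : (n < y)%N -> weight y = 0.
Proof. by rewrite /weight; case: ifP => //; lia. Qed.

Lemma sum_pred1_weight a : \sum_(1 <= y < n.+1 | y == a) mu y = weight a.
Proof.
rewrite /weight; case: ifPn => a_in.
  by rewrite -big_filter filter_pred1_uniq ?iota_uniq ?mem_index_iota ?big_seq1.
by apply: big1_seq => y /andP[/eqP -> ]; rewrite mem_index_iota (negbTE a_in).
Qed.

Lemma ball_mass0 x : ball_mass n mu x 0 = weight x.
Proof. by rewrite -sum_pred1_weight; apply: eq_bigl => y; rewrite /pdist; lia. Qed.

Lemma ball_mass_step x r :
  ball_mass n mu x r.+1 = ball_mass n mu x r + weight (x + r.+1) + weight (x - r.+1).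
Proof.
rewrite /ball_mass (bigID (fun y => pdist x y <= r)%N) /= -addrA; congr (_ + _).
  by apply: eq_bigl => y; rewrite /pdist; lia.
rewrite (bigID (pred1 (x + r.+1)%N)) /= -!sum_pred1_weight.
by congr (_ + _); apply: congr_big_nat => // y y_in; rewrite /pdist; lia.
Qed.

Lemma doubling_ratio0 y : (1 <= y <= n)%N ->
  doubling_ratio y 0 = ball_mass n mu y 1 / mu y.
Proof. by move=> y_in; rewrite /doubling_ratio ball_mass0 /weight y_in. Qed.

Hypothesis mu_gt0 : is_measure n mu.

Lemma weight_ge0 y : 0 <= weight y.
Proof. by rewrite /weight; case: ifP => // /mu_gt0 /ltW. Qed.

Lemma arm_ge0 x r : 0 <= arm x r.
Proof. by apply: sumr_ge0 => i _; apply: weight_ge0. Qed.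

Lemma ball_mass_le x r x' r' :
  (forall y, (1 <= y <= n)%N -> (pdist x y <= r)%N -> (pdist x' y <= r')%N) ->
  ball_mass n mu x r <= ball_mass n mu x' r'.
Proof.
move=> sub; rewrite /ball_mass big_mkcond [leRHS]big_mkcond /=.
apply: ler_sum_nat => y y_in.
case: ifP => [/(sub y y_in) -> //|_]; case: ifP => // _.
exact/ltW/mu_gt0.
Qed.

Lemma ball_mass_gt0 x r : (1 <= x <= n)%N -> 0 < ball_mass n mu x r.
Proof.
move=> x_in; apply: lt_le_trans (ball_mass_le (x := x) (r := 0) _).
  by rewrite ball_mass0 /weight x_in mu_gt0.
by move=> y _; rewrite /pdist; lia.
Qed.

Lemma doubling_ratio_ge0 x k : 0 <= doubling_ratio x k.
Proof.
have ball_ge0 r : 0 <= ball_mass n mu x r.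
  rewrite /ball_mass big_seq_cond sumr_ge0 // => y /andP[+ _].
  by rewrite mem_index_iota => /mu_gt0 /ltW.
exact: divr_ge0.
Qed.

Lemma doubling_ratio_le_at1 x k : (1 <= x <= n)%N -> (x <= k.+1)%N ->
  doubling_ratio x k <= doubling_ratio 1 (x + k).-1.
Proof.
move=> x_in xk; rewrite /doubling_ratio.
have -> : ball_mass n mu x k = ball_mass n mu 1 (x + k).-1.
  by apply: congr_big_nat => // y y_in; rewrite /pdist; lia.
apply: ler_wpM2r; first by rewrite invr_ge0 ltW // ball_mass_gt0 //; lia.
by apply: ball_mass_le => y _; rewrite /pdist; lia.
Qed.

Hypothesis mu_sym : is_symmetric n mu.

Lemma weight_mirror x j : (x <= n.+1)%N -> weight (x - j) = weight (n.+1 - x + j).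
Proof.
move=> xn; rewrite /weight; case: ifP => in1; case: ifP => in2 //; try lia.
by rewrite mu_sym // (_ : n.+1 - (x - j) = n.+1 - x + j)%N //; lia.
Qed.

Lemma weight_sym x : (x <= n.+1)%N -> weight (n.+1 - x) = weight x.
Proof. by move=> xn; rewrite weight_mirror // subnn. Qed.

Lemma ball_massE x r : (x <= n.+1)%N ->
  ball_mass n mu x r = weight x + arm x r + arm (n.+1 - x) r.
Proof.
move=> xn; elim: r => [|r IHr]; first by rewrite ball_mass0 /arm !big_ord0 !addr0.
by rewrite ball_mass_step IHr /arm !big_ord_recr /= weight_mirror //; lra.
Qed.

Lemma doubling_ratio_sym x k : (x <= n.+1)%N ->
  doubling_ratio x k = doubling_ratio (n.+1 - x) k.
Proof.
move=> xn; rewrite /doubling_ratio !ball_massE ?leq_subr // weight_sym // subKn //.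
by rewrite -!addrA (addrC (arm x _)) (addrC (arm x k)).
Qed.

Lemma ball_mass1 r : ball_mass n mu 1 r = arm 0 r.+1.
Proof.
rewrite ball_massE // subn1 [arm n r]big1 => [|i _]; last by rewrite weight_out //; lia.
by rewrite /arm big_ord_recl addr0.
Qed.

End PathWeights.

Section ConcaveWeights.
Variables (R : realType) (n : nat) (mu : nat -> R).
Hypotheses (mu_gt0 : is_measure n mu) (mu_sym : is_symmetric n mu).
Hypothesis mu_concave : neighbours_le n mu 2.

Local Notation w y := (weight n mu y%N).

Lemma weight_exchange a b c d : (a <= b)%N -> (a <= c)%N -> (a + d = b + c)%N ->
  (d <= n.+1)%N -> w a + w d <= w b + w c.
Proof. exact: (concave_exchange (N := n.+1) mu_concave). Qed.

Lemma weight_shift_le C t : (t <= C)%N -> w (C.+1 + t) <= w C + w C.+1.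
Proof.
move=> tC; have w_ge0 := weight_ge0 mu_gt0.
have [inside|outside] := leqP (C.+1 + t) n.+1.
  have : w (C - t) + w (C.+1 + t) <= w C + w C.+1 by apply: weight_exchange; lia.
  by have := w_ge0 (C - t)%N; lra.
by rewrite weight_out; [have := w_ge0 C; have := w_ge0 C.+1; lra | lia].
Qed.

Lemma weight_le_mid y z : (y <= z)%N -> (y + z <= n.+1)%N -> w y <= w z.
Proof.
move=> yz yzn.
have : w y + w (n.+1 - y) <= w z + w (n.+1 - z) by apply: weight_exchange; lia.
by rewrite !(weight_sym mu_sym); [lra | lia | lia].
Qed.

Lemma weight_cross_le m i : (i < m)%N -> (n <= 3 * m + 2)%N ->
  w (2 * m).+1 * w (m - i) <= w m.+1 * w (m + i).+1.
Proof.
move=> im nm; have w_ge0 := weight_ge0 mu_gt0.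
have [short|long] := ltnP n (2 * m).+1.
  by rewrite weight_out // mul0r mulr_ge0.
rewrite -(weight_sym mu_sym); last lia.
have [middle|full] := leqP n (3 * m + 1).
  by apply: ler_pM => //; apply: weight_le_mid; lia.
rewrite (_ : n.+1 - (2 * m).+1 = m.+2)%N; last lia.
have amgm : w m * w m.+2 <= w m.+1 ^+ 2.
  apply: le_trans (leif_AGM2 _ _) _.
  have : w m + w m.+2 <= 2 * w m.+1 by apply: mu_concave; lia.
  by rewrite ler_sqr ?nnegrE ?divr_ge0 ?addr_ge0 //; lra.
apply: le_trans (_ : w m.+2 * w m <= _).
  by apply: ler_wpM2l; [exact: w_ge0 | apply: weight_le_mid; lia].
rewrite mulrC; apply: le_trans amgm _.
by rewrite expr2; apply: ler_wpM2l; [exact: w_ge0 | apply: weight_le_mid; lia].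
Qed.

Lemma ball_mass1_cross_le K : (n <= 3 * K + 5)%N ->
  ball_mass n mu 1 (2 * K + 3) * ball_mass n mu 1 K <=
  ball_mass n mu 1 (2 * K + 1) * ball_mass n mu 1 K.+1.
Proof.
move=> nK; rewrite !(ball_mass1 mu_sym).
set m := K.+1.
rewrite (_ : (2 * K + 3).+1 = (2 * m).+2)%N; last lia.
rewrite (_ : (2 * K + 1).+1 = 2 * m)%N; last lia.
have w_ge0 := weight_ge0 mu_gt0.
have S_ge0 := arm_ge0 mu_gt0 0 m.
have split_top : arm n mu 0 (2 * m).+2 = arm n mu 0 (2 * m) + w (2 * m).+1 + w (2 * m).+2.
  by rewrite /arm !big_ord_recr.
have split_mid : arm n mu 0 m.+1 = arm n mu 0 m + w m.+1 by rewrite /arm big_ord_recr.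
have halves : arm n mu 0 (2 * m) = arm n mu 0 m + \sum_(i < m) w (m + i).+1.
  by rewrite /arm mul2n -addnn big_split_ord.
have top_le : w (2 * m).+1 * arm n mu 0 m <= w m.+1 * \sum_(i < m) w (m + i).+1.
  rewrite /arm (reindex_inj rev_ord_inj) !mulr_sumr; apply: ler_sum => i _ /=.
  have im := ltn_ord i; rewrite add0n (_ : (m - i.+1).+1 = m - i)%N; last lia.
  by apply: weight_cross_le; lia.
have last_le : w (2 * m).+2 <= w m.+1.
  have [short|long] := ltnP n (2 * m).+2; first by rewrite weight_out.
  by rewrite -(weight_sym mu_sym); [apply: weight_le_mid | ]; lia.
have := ler_wpM2r S_ge0 last_le.
rewrite split_top split_mid halves; lra.
Qed.

Lemma doubling_ratio1_step K : (0 < n)%N -> (n <= 3 * K + 5)%N ->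
  doubling_ratio n mu 1 K.+1 <= doubling_ratio n mu 1 K.
Proof.
move=> n_gt0 nK; have pos r : 0 < ball_mass n mu 1 r by apply: ball_mass_gt0 => //; lia.
rewrite /doubling_ratio ler_pdivrMr // mulrAC ler_pdivlMr //.
by rewrite (_ : 2 * K.+1 + 1 = 2 * K + 3)%N; [apply: ball_mass1_cross_le | lia].
Qed.

Lemma doubling_ratio1_anti K d : (0 < n)%N -> (n <= 3 * K + 5)%N ->
  doubling_ratio n mu 1 (K + d) <= doubling_ratio n mu 1 K.
Proof.
move=> n_gt0 nK; elim: d => [|d IHd]; first by rewrite addn0.
by rewrite addnS; apply: le_trans IHd; apply: doubling_ratio1_step; lia.
Qed.

End ConcaveWeights.

Section DoublingBound.
Variables (R : realType) (n : nat) (mu : nat -> R) (B : R).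
Hypotheses (mu_gt0 : is_measure n mu) (mu_sym : is_symmetric n mu).
Hypotheses (B_le3 : B <= 3) (mu_nbr : neighbours_le n mu (B - 1)).

Lemma neighbours_le2 : neighbours_le n mu 2.
Proof.
move=> i i_lt; apply: le_trans (mu_nbr i_lt) _.
by apply: ler_wpM2r; [exact: weight_ge0 | have := B_le3; lra].
Qed.

Lemma ball_mass_interior x k : (k < x)%N -> (x + k <= n)%N ->
  ball_mass n mu x (2 * k + 1) <= B * ball_mass n mu x k.
Proof.
move=> kx xk.
have arm_le y : (k < y)%N -> (y + k <= n)%N ->
    arm n mu y (2 * k + 1) <= weight n mu (y + 1) + B * arm n mu y k.
  move=> ky yk; rewrite /arm.
  apply: (sum_doubling_le (a := fun j => weight n mu (y + j))) => i ik.
    by rewrite !addnS; apply: mu_nbr; lia.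
  rewrite /= [(y + i.+1)%N]addnS (_ : y + (k + i).+2 = (y + i).+1 + k.+1)%N; last lia.
  by apply: (weight_shift_le mu_gt0 neighbours_le2); lia.
have center : weight n mu (n.+1 - x + 1) + weight n mu (x + 1) <= (B - 1) * weight n mu x.
  rewrite -(weight_mirror mu_sym); last lia.
  by rewrite subn1 addn1; have := @mu_nbr x.-1; rewrite prednK; [apply; lia | lia].
have := arm_le x kx xk; have := arm_le (n.+1 - x)%N ltac:(lia) ltac:(lia).
by rewrite !(ball_massE mu_sym); [lra | lia | lia].
Qed.

Hypothesis n_ge3 : (3 <= n)%N.
Hypothesis ratio1_small :
  forall K, (K < ceil_div (n - 2) 3)%N -> doubling_ratio n mu 1 K <= B.

Lemma doubling_ratio1_le K : doubling_ratio n mu 1 K <= B.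
Proof.
have [small|large] := ltnP K (ceil_div (n - 2) 3); first exact: ratio1_small.
have [c_gt0 nc] : (0 < ceil_div (n - 2) 3)%N /\ (n <= 3 * (ceil_div (n - 2) 3).-1 + 5)%N.
  by rewrite /ceil_div; split; lia.
rewrite -(subnKC (leq_trans (leq_pred _) large)).
apply: le_trans (doubling_ratio1_anti _ _ neighbours_le2 _ _ _) (ratio1_small _) => //.
- lia.
- by rewrite prednK.
Qed.

Lemma doubling_ratio_le x k : (1 <= x <= n)%N -> doubling_ratio n mu x k <= B.
Proof.
have near_end y : (1 <= y <= n)%N -> (y <= k)%N -> doubling_ratio n mu y k <= B.
  move=> y_in yk; apply: le_trans (doubling_ratio1_le (y + k).-1).
  by apply: (doubling_ratio_le_at1 mu_gt0); lia.
move=> x_in; have [xk|kx] := leqP x k; first exact: near_end.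
have [xkn|nxk] := leqP (x + k) n.
  by rewrite /doubling_ratio ler_pdivrMr ?ball_mass_gt0 //; apply: ball_mass_interior.
by rewrite (doubling_ratio_sym mu_sym); [apply: near_end | ]; lia.
Qed.

End DoublingBound.

Section SupremumBounds.
Variables (R : realType) (n : nat) (mu : nat -> R).
Hypothesis mu_gt0 : is_measure n mu.

Lemma doubling_ratio_bounded :
  exists M : R, forall x k, (1 <= x <= n)%N -> doubling_ratio n mu x k <= M.
Proof.
exists (ball_mass n mu 1 n * \sum_(1 <= y < n.+1) (mu y)^-1) => x k x_in.
have mux_gt0 := mu_gt0 x_in.
have inv_le : (mu x)^-1 <= \sum_(1 <= y < n.+1) (mu y)^-1.
  rewrite (bigD1_seq x) ?mem_index_iota ?iota_uniq //= lerDl big_seq_cond.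
  by apply: sumr_ge0 => y /andP[/[!mem_index_iota] /mu_gt0 /ltW]; rewrite invr_ge0.
have num_le : ball_mass n mu x (2 * k + 1) <= ball_mass n mu 1 n.
  by apply: ball_mass_le => // y y_in _; rewrite /pdist; lia.
have den_ge : mu x <= ball_mass n mu x k.
  have <- : ball_mass n mu x 0 = mu x by rewrite ball_mass0 /weight x_in.
  by apply: ball_mass_le => // y _; rewrite /pdist; lia.
rewrite /doubling_ratio; apply: le_trans (_ : _ <= ball_mass n mu 1 n / mu x) _.
  rewrite ler_pdivrMr ?ball_mass_gt0 // mulrAC ler_pdivlMr //.
  by apply: ler_pM => //; apply/ltW; [apply: ball_mass_gt0 |].
by apply: ler_wpM2l => //; apply/ltW/ball_mass_gt0 => //; lia.
Qed.

Lemma doubling_ratio_le_C_mu x k : (1 <= x <= n)%N -> doubling_ratio n mu x k <= C_mu n mu.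
Proof.
move=> x_in; have [M ub] := doubling_ratio_bounded.
apply: ub_le_sup; last by exists x, k.
by exists M => _ [y [l [y_in ->]]]; apply: ub.
Qed.

Lemma doubling_ratio1_le_M1 K : (K < ceil_div (n - 2) 3)%N ->
  doubling_ratio n mu 1 K <= M1 n mu.
Proof.
move=> K_lt; have [M ub] := doubling_ratio_bounded.
apply: ub_le_sup; last by exists K.
by exists M => _ [l [l_lt ->]]; apply: ub; move: l_lt; rewrite /ceil_div; lia.
Qed.

Lemma doubling_ratio0_le_C0 y : (1 <= y <= n)%N -> doubling_ratio n mu y 0 <= C0_mu n mu.
Proof.
move=> y_in; have [M ub] := doubling_ratio_bounded.
apply: ub_le_sup; last by exists y; rewrite doubling_ratio0.
by exists M => _ [z [z_in ->]]; rewrite -doubling_ratio0 //; apply: ub.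
Qed.

Lemma C_mu_le B : (0 < n)%N ->
  (forall x k, (1 <= x <= n)%N -> doubling_ratio n mu x k <= B) -> C_mu n mu <= B.
Proof.
move=> n_gt0 ub; apply: ge_sup; first by exists (doubling_ratio n mu 1 0), 1%N, 0%N.
by move=> _ [x [k [x_in ->]]]; apply: ub.
Qed.

Lemma M1_le_C_mu : (3 <= n)%N -> M1 n mu <= C_mu n mu.
Proof.
move=> n_ge3; apply: ge_sup.
  by exists (doubling_ratio n mu 1 0), 0%N; split => //; rewrite /ceil_div; lia.
by move=> _ [K [_ ->]]; apply: doubling_ratio_le_C_mu; lia.
Qed.

Lemma C0_mu_le_C_mu : (0 < n)%N -> C0_mu n mu <= C_mu n mu.
Proof.
move=> n_gt0; apply: ge_sup; first by exists (ball_mass n mu 1 1 / mu 1), 1%N.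
by move=> _ [y [y_in ->]]; rewrite -doubling_ratio0 //; apply: doubling_ratio_le_C_mu.
Qed.

Lemma neighbours_le_of_ratio0 B :
  (forall y, (1 <= y <= n)%N -> doubling_ratio n mu y 0 <= B) -> neighbours_le n mu (B - 1).
Proof.
move=> ub i i_lt; have i_in : (1 <= i.+1 <= n)%N by lia.
have := ub _ i_in; rewrite doubling_ratio0 // ler_pdivrMr ?mu_gt0 //.
by rewrite ball_mass_step ball_mass0 addn1 subn1 /= /weight i_in; lra.
Qed.

End SupremumBounds.

Lemma C_L_le3 (R : realType) n : (0 < n)%N -> C_L R n <= 3.
Proof.
move=> n_gt0; pose cnt := fun _ : nat => 1 : R.
have cnt_gt0 : is_measure n cnt by move=> *; exact: ltr01.
have cnt_sym : is_symmetric n cnt by [].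
apply: le_trans (_ : C_mu n cnt <= 3).
  apply: ge_inf; last by exists cnt.
  exists 0 => _ [nu [nu_gt0 ->]]; apply: le_trans (doubling_ratio_ge0 nu_gt0 1 0) _.
  exact: doubling_ratio_le_C_mu.
apply: C_mu_le => // x k x_in.
have arm_le y : (0 < y)%N ->
    arm n cnt y (2 * k + 1) <= weight n cnt y + 2 * arm n cnt y k.
  move=> y_pos; rewrite -[in weight n cnt y](addn0 y).
  apply: (sum_doubling_le_nonincreasing (a := fun j => weight n cnt (y + j))) => i j ij.
  by rewrite /weight /cnt; case: ifP => ?; case: ifP => ? //; first [lia | lra].
have := arm_le x ltac:(lia); have := arm_le (n.+1 - x)%N ltac:(lia).
have := arm_ge0 cnt_gt0 x k; have := arm_ge0 cnt_gt0 (n.+1 - x) k.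
have -> : weight n cnt (n.+1 - x) = weight n cnt x by apply: (weight_sym cnt_sym); lia.
rewrite /doubling_ratio ler_pdivrMr ?ball_mass_gt0 //.
by rewrite !(ball_massE cnt_sym); [lra | lia | lia].
Qed.

Theorem proposition6p1 (R : realType) (n : nat) (mu : nat -> R) :
  (3 <= n)%N ->
  is_measure n mu -> is_symmetric n mu ->
  C_L R n = C_mu n mu ->
  C_mu n mu = Num.max (M1 n mu) (C0_mu n mu).
Proof.
move=> n_ge3 mu_gt0 mu_sym CL_eq; have n_gt0 : (0 < n)%N by lia.
set B := Num.max (M1 n mu) (C0_mu n mu).
have B_le_C : B <= C_mu n mu by rewrite ge_max M1_le_C_mu // C0_mu_le_C_mu.
have C_le3 : C_mu n mu <= 3 by rewrite -CL_eq C_L_le3.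
apply/le_anti; rewrite B_le_C andbT.
apply: C_mu_le => // x k x_in.
apply: (doubling_ratio_le mu_gt0 mu_sym) => //.
- exact: le_trans B_le_C C_le3.
- apply: neighbours_le_of_ratio0 => // y y_in.
  by apply: le_trans (doubling_ratio0_le_C0 mu_gt0 y_in) _; rewrite le_max lexx orbT.
- move=> K K_lt.
  by apply: le_trans (doubling_ratio1_le_M1 mu_gt0 K_lt) _; rewrite le_max lexx.
Qed.
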